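(* Let $t$ be a probabilistic process term of $P_{\mathrm{PA}}$ and let $\sigma_1,\sigma_2$ be closed substitutions such that $\mathbf d(\sigma_1(x),\sigma_2(x))<1$ for every state variable $x$. Then \[ \mathbf d(\sigma_1(t),\sigma_2(t))\le \mathrm{pda}\bigl(\llbracket t\rrbracket_{\mathcal P},\mathbf d(\sigma_1,\sigma_2)\bigr). \]
   Context: Probabilistic transition systems and bisimilarity metric. A signature $\Sigma$ is a countable set of operators $f$, each with an arity $r(f)\in\mathbb N$. Fix disjoint countably infinite sets $\mathcal V_s$ of state variables and $\mathcal V_d$ of distribution variables; $\mathcal V=\mathcal V_s\cup\mathcal V_d$. Open (state) terms are built from state variables and operators; closed terms (processes) $T(\Sigma)$ contain no variables. $\Delta(T(\Sigma))$ is the set of discrete probability distributions on $T(\Sigma)$, $\delta_t$ is the Dirac distribution at $t$, and for distributions $\pi_1,\dots,\pi_{r(f)}$, $f(\pi_1,\dots,\pi_{r(f)})$ is the distribution assigning $f(t_1,\dots,t_{r(f)})$ probability $\prod_i\pi_i(t_i)$. Distribution terms are: distribution variables $\mu$, $\delta(t)$ for state terms $t$, convex combinations $\sum_{i\in I}q_i\theta_i$ ($q_i\in(0,1]$, $\sum q_i=1$), and $f(\theta_1,\dots,\theta_{r(f)})$. A closed substitution $\sigma$ maps state variables to closed terms and distribution variables to distributions; it extends homomorphically to state terms and to distribution terms via $\sigma(\delta(t))=\delta_{\sigma(t)}$, $\sigma(\sum q_i\theta_i)=\sum q_i\sigma(\theta_i)$, $\sigma(f(\theta_1,\dots))=f(\sigma(\theta_1),\dots)$.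 A PTS is $(T(\Sigma),A,\to)$ with $A$ a countable set of actions and $\to\subseteq T(\Sigma)\times A\times\Delta(T(\Sigma))$; write $t\xrightarrow{a}\pi$, and $\mathit{der}(t,a)=\{\pi\mid t\xrightarrow a\pi\}$. A PGSOS rule has the form $\dfrac{\{x_i\xrightarrow{a_{i,m}}\mu_{i,m}\mid i\in I,m\in M_i\}\ \ \{x_i\not\xrightarrow{b_{i,n}}\mid i\in I,n\in N_i\}}{f(x_1,\dots,x_{r(f)})\xrightarrow{a}\theta}$ with $I=\{1,\dots,r(f)\}$, finite $M_i,N_i$, pairwise distinct $x_i\in\mathcal V_s$, pairwise distinct $\mu_{i,m}\in\mathcal V_d$, and $\theta$ a distribution term whose variables are among the $x_i$ and $\mu_{i,m}$. A PTSS $(\Sigma,A,R)$ with $R$ a countable set of PGSOS rules determines a unique supported model: $t\xrightarrow a\pi$ iff for some rule and closed substitution $\sigma$, $\sigma(x_i)\xrightarrow{a_{i,m}}\sigma(\mu_{i,m})$ for all positive premises, $\sigma(x_i)$ has no $b_{i,n}$-transition for all negative premises, $\sigma(f(x_1,\dots))=t$ and $\sigma(\theta)=\pi$. For $d:T(\Sigma)\times T(\Sigma)\to[0,1]$, the Kantorovich lifting is $K(d)(\pi,\pi')=\min_{\omega}\sum_{t,t'}d(t,t')\omega(t,t')$ over couplings $\omega$ of $\pi,\pi'$; the Hausdorff lifting is $H(\hat d)(\Pi_1,\Pi_2)=\max\{\sup_{\pi_1\in\Pi_1}\inf_{\pi_2\in\Pi_2}\hat d(\pi_1,\pi_2),\sup_{\pi_2\in\Pi_2}\inf_{\pi_1\in\Pi_1}\hat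 d(\pi_2,\pi_1)\}$ with $\inf\emptyset=1$, $\sup\emptyset=0$. Let $B(d)(t,t')=\sup_{a\in A}H(K(d))(\mathit{der}(t,a),\mathit{der}(t',a))$. The bisimilarity metric $\mathbf d$ is the least fixed point of $B$ on $[0,1]^{T(\Sigma)\times T(\Sigma)}$ ordered pointwise. The process algebra $P_{\mathrm{PA}}$: operators are the constant $0$, for each $a\in A$, $n\ge1$, $q_1,\dots,q_n\in(0,1]$ with $\sum q_i=1$ the $n$-ary prefix $a.\bigoplus_{i=1}^n[q_i]\_$ (written $a.\_$ when $n=1$), binary $+$, and binary $\|_B$ for each $B\subseteq A$ ($\|$ denotes $\|_A$). Rules: $a.\bigoplus_{i}[q_i]x_i\xrightarrow a\sum_i q_i\delta(x_i)$; from $x_1\xrightarrow a\mu_1$ infer $x_1+x_2\xrightarrow a\mu_1$; from $x_2\xrightarrow a\mu_2$ infer $x_1+x_2\xrightarrow a\mu_2$; for $a\in B$ from $x_1\xrightarrow a\mu_1$, $x_2\xrightarrow a\mu_2$ infer $x_1\|_Bx_2\xrightarrow a\mu_1\|_B\mu_2$; for $a\notin B$ from $x_1\xrightarrow a\mu_1$ infer $x_1\|_Bx_2\xrightarrow a\mu_1\|_B\delta(x_2)$ and from $x_2\xrightarrow a\mu_2$ infer $x_1\|_Bx_2\xrightarrow a\delta(x_1)\|_B\mu_2$. Probabilistic process terms are the open terms built only from $0$, state variables, prefixes $a.\bigoplus_{i=1}^n[q_i]\_$ and $\|$. Multiplicities: $\mathcal M$ is the set of maps $m:\mathcal V\to\mathbb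 N\cup\{\infty\}$; $0$ is the zero map and $1_x$ maps $x$ to $1$ and other variables to $0$. $\mathcal P$ is the set of discrete probability distributions on $\mathcal M$. For probabilistic terms: $\llbracket0\rrbracket_{\mathcal P}=\delta_0$, $\llbracket x\rrbracket_{\mathcal P}=\delta_{1_x}$, $\llbracket t_1\|t_2\rrbracket_{\mathcal P}(m)=\sum\{\llbracket t_1\rrbracket_{\mathcal P}(m_1)\llbracket t_2\rrbracket_{\mathcal P}(m_2)\mid m_1,m_2\in\mathcal M,\ m(x)=m_1(x)+m_2(x)\ \forall x\}$, $\llbracket a.\bigoplus_{i=1}^n[q_i]t_i\rrbracket_{\mathcal P}=\sum_i q_i\llbracket t_i\rrbracket_{\mathcal P}$. $\mathcal E$ is the set of maps $e:\mathcal V\to[0,1)$. $\mathrm{dda}(m,e)=1-\prod_{x\in\mathcal V}(1-e(x))^{m(x)}$ (with $c^\infty=0$ for $0\le c<1$, $1^\infty=1$), and $\mathrm{pda}(p,e)=\sum_{m\in\mathcal M}p(m)\,\mathrm{dda}(m,e)$. For closed substitutions, $\mathbf d(\sigma_1,\sigma_2)\in\mathcal E$ is $x\mapsto\mathbf d(\sigma_1(x),\sigma_2(x))$. *)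

From Stdlib Require Import Reals Lra List Classical ClassicalEpsilon
  FunctionalExtensionality PropExtensionality.
Import ListNotations.
Open Scope R_scope.

Definition indic (P : Prop) : R :=
  if excluded_middle_informative P then 1 else 0.

Definition sumR (l : list R) : R := fold_right Rplus 0 l.

(** supremum with the convention sup(empty) = 0 (the sets used are all
    bounded subsets of [0,1]) *)
Definition Rsup0 (S : R -> Prop) : R :=
  match excluded_middle_informative (bound S /\ exists x, S x) with
  | left H => proj1_sig (completeness S (proj1 H) (proj2 H))
  | right _ => 0
  end.

(** infimum with the convention inf(empty) = 1 *)
Definition Rinf1 (S : R -> Prop) : R :=
  let E := fun y => S (- y) in
  match excluded_middle_informative (bound E /\ exists y, E y) with
  | left H => - proj1_sig (completeness E (proj1 H) (proj2 H))
  | right _ => 1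
  end.

Inductive term (A : Type) : Type :=
| Nil : term A
| Var : nat -> term A
| Pref : A -> list R -> list (term A) -> term A  (* a.(+)_{i}[q_i] t_i *)
| Plus : term A -> term A -> term A
| Par : (A -> Prop) -> term A -> term A -> term A.

Arguments Nil {A}.
Arguments Var {A} _.
Arguments Pref {A} _ _ _.
Arguments Plus {A} _ _.
Arguments Par {A} _ _ _.

Definition valid_probs (q : list R) : Prop :=
  q <> [] /\ Forall (fun r => 0 < r <= 1) q /\ sumR q = 1.

(** well-formed terms: every prefix operator is an operator of the signature *)
Inductive wf {A : Type} : term A -> Prop :=
| wf_nil : wf Nil
| wf_var x : wf (Var x)
| wf_pref a q ts : valid_probs q -> length q = length ts -> Forall wf ts ->
    wf (Pref a q ts)
| wf_plus t1 t2 : wf t1 -> wf t2 -> wf (Plus t1 t2)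
| wf_par B t1 t2 : wf t1 -> wf t2 -> wf (Par B t1 t2).

Inductive ground {A : Type} : term A -> Prop :=
| gr_nil : ground Nil
| gr_pref a q ts : Forall ground ts -> ground (Pref a q ts)
| gr_plus t1 t2 : ground t1 -> ground t2 -> ground (Plus t1 t2)
| gr_par B t1 t2 : ground t1 -> ground t2 -> ground (Par B t1 t2).

Definition closed_term {A : Type} (t : term A) : Prop := wf t /\ ground t.

Inductive prob_term {A : Type} : term A -> Prop :=
| pt_nil : prob_term Nil
| pt_var x : prob_term (Var x)
| pt_pref a q ts : valid_probs q -> length q = length ts ->
    Forall prob_term ts -> prob_term (Pref a q ts)
| pt_par t1 t2 : prob_term t1 -> prob_term t2 ->
    prob_term (Par (fun _ => True) t1 t2).

Fixpoint subst {A : Type} (s : nat -> term A) (t : term A) : term A :=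
  match t with
  | Nil => Nil
  | Var x => s x
  | Pref a q ts =>
      Pref a q ((fix go (l : list (term A)) : list (term A) :=
                   match l with [] => [] | u :: l' => subst s u :: go l' end) ts)
  | Plus t1 t2 => Plus (subst s t1) (subst s t2)
  | Par B t1 t2 => Par B (subst s t1) (subst s t2)
  end.

Definition dist (A : Type) := term A -> R.

Definition dirac {A : Type} (t : term A) : dist A := fun u => indic (u = t).

Definition pref_dist {A : Type} (q : list R) (ts : list (term A)) : dist A :=
  fun u => sumR (map (fun p => fst p * indic (u = snd p)) (combine q ts)).

Definition par_dist {A : Type} (B : A -> Prop) (p1 p2 : dist A) : dist A :=
  fun u => match u with
           | Par B' u1 u2 => indic (B' = B) * p1 u1 * p2 u2
           | _ => 0
           end.

(** * The PTS induced by the PGSOS rules of P_PA (least = supported model) *)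

Inductive step {A : Type} : term A -> A -> dist A -> Prop :=
| st_pref a q ts : step (Pref a q ts) a (pref_dist q ts)
| st_plusl t1 t2 a p : step t1 a p -> step (Plus t1 t2) a p
| st_plusr t1 t2 a p : step t2 a p -> step (Plus t1 t2) a p
| st_sync (B : A -> Prop) t1 t2 a p1 p2 : B a -> step t1 a p1 -> step t2 a p2 ->
    step (Par B t1 t2) a (par_dist B p1 p2)
| st_left (B : A -> Prop) t1 t2 a p1 : ~ B a -> step t1 a p1 ->
    step (Par B t1 t2) a (par_dist B p1 (dirac t2))
| st_right (B : A -> Prop) t1 t2 a p2 : ~ B a -> step t2 a p2 ->
    step (Par B t1 t2) a (par_dist B (dirac t1) p2).

Definition der {A : Type} (t : term A) (a : A) : dist A -> Prop := fun p => step t a p.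

(** a coupling is given as a finite weighted list of pairs (all distributions
    of the model are finitely supported, hence so are their couplings) *)
Definition coupling (A : Type) := list (term A * term A * R).

Definition marg1 {A : Type} (w : coupling A) (u : term A) : R :=
  sumR (map (fun e => snd e * indic (fst (fst e) = u)) w).
Definition marg2 {A : Type} (w : coupling A) (u : term A) : R :=
  sumR (map (fun e => snd e * indic (snd (fst e) = u)) w).

Definition is_coupling {A : Type} (p p' : dist A) (w : coupling A) : Prop :=
  Forall (fun e => 0 <= snd e) w /\
  (forall u, marg1 w u = p u) /\ (forall u, marg2 w u = p' u).

Definition cost {A : Type} (d : term A -> term A -> R) (w : coupling A) : R :=
  sumR (map (fun e => snd e * d (fst (fst e)) (snd (fst e))) w).

Definition Kant {A : Type} (d : term A -> term A -> R) (p p' : dist A) : R :=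
  Rinf1 (fun c => exists w, is_coupling p p' w /\ c = cost d w).

Definition Haus {A : Type} (dh : dist A -> dist A -> R)
    (P1 P2 : dist A -> Prop) : R :=
  Rmax (Rsup0 (fun r => exists p1, P1 p1 /\
                  r = Rinf1 (fun s => exists p2, P2 p2 /\ s = dh p1 p2)))
       (Rsup0 (fun r => exists p2, P2 p2 /\
                  r = Rinf1 (fun s => exists p1, P1 p1 /\ s = dh p2 p1))).

Definition Bfun {A : Type} (d : term A -> term A -> R) (t t' : term A) : R :=
  Rsup0 (fun r => exists a : A, r = Haus (Kant d) (der t a) (der t' a)).

(** functions in [0,1]^{T(Sigma) x T(Sigma)} (values outside T(Sigma) ignored) *)
Definition unit_valued {A : Type} (d : term A -> term A -> R) : Prop :=
  forall t t', closed_term t -> closed_term t' -> 0 <= d t t' <= 1.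

Definition fixpoint_B {A : Type} (d : term A -> term A -> R) : Prop :=
  forall t t', closed_term t -> closed_term t' -> Bfun d t t' = d t t'.

Definition is_bisim_metric {A : Type} (d : term A -> term A -> R) : Prop :=
  unit_valued d /\ fixpoint_B d /\
  forall d', unit_valued d' -> fixpoint_B d' ->
    forall t t', closed_term t -> closed_term t' -> d t t' <= d' t t'.

(** m : V_s -> N u {oo}, with None standing for oo *)
Definition mult := nat -> option nat.
Definition mzero : mult := fun _ => Some 0%nat.
Definition mone (x : nat) : mult := fun y => if Nat.eqb y x then Some 1%nat else Some 0%nat.
Definition oadd (a b : option nat) : option nat :=
  match a, b with Some n, Some k => Some (n + k)%nat | _, _ => None end.
Definition madd (m1 m2 : mult) : mult := fun x => oadd (m1 x) (m2 x).

(** distributions on multiplicities, as finite formal convex combinations *)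
Definition pdist := list (R * mult).

Fixpoint sem {A : Type} (t : term A) : pdist :=
  match t with
  | Nil => [(1, mzero)]
  | Var x => [(1, mone x)]
  | Pref _ q ts =>
      (fix go (q : list R) (l : list (term A)) {struct l} : pdist :=
         match q, l with
         | qi :: q', u :: l' => map (fun e => (qi * fst e, snd e)) (sem u) ++ go q' l'
         | _, _ => []
         end) q ts
  | Par _ t1 t2 =>
      flat_map (fun e1 => map (fun e2 => (fst e1 * fst e2, madd (snd e1) (snd e2)))
                              (sem t2)) (sem t1)
  | Plus _ _ => []  (* not a probabilistic process term *)
  end.

(** (1 - e x)^(m x), with c^oo = 0 for c < 1 and 1^oo = 1 *)
Definition factor (m : mult) (e : nat -> R) (x : nat) : R :=
  match m x with
  | Some k => (1 - e x) ^ k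
  | None => if excluded_middle_informative (e x = 0) then 1 else 0
  end.

Definition partial_prod (m : mult) (e : nat -> R) (n : nat) : R :=
  fold_right Rmult 1 (map (factor m e) (seq 0 n)).

(** dda(m,e) = 1 - prod_x (1-e(x))^{m(x)}; the infinite product of factors in
    [0,1] is the infimum (= limit) of its partial products *)
Definition dda (m : mult) (e : nat -> R) : R :=
  1 - Rinf1 (fun p => exists n, p = partial_prod m e n).

Definition pda (p : pdist) (e : nat -> R) : R :=
  sumR (map (fun c => fst c * dda (snd c) e) p).

(** For a prefix, coupling
    [s1 t_i] with [s2 t_i] with weight [q_i] bounds the distance by
    [sum_i q_i d (s1 t_i) (s2 t_i)], and [pda] is linear in such mixtures.
    For [t1 || t2] the key fact is
    [d (x1 || x2) (y1 || y2) <= 1 - (1 - d x1 y1) (1 - d x2 y2)]: capping [d] by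
    the right-hand side on parallel pairs gives a prefixed point of the
    bisimulation functional, since every synchronised move is matched
    componentwise and the product of near-optimal couplings of the components
    costs at most the same expression. Since [sem (t1 || t2)] is the
    convolution of [sem t1] and [sem t2], the probability [1 - pda] of
    agreement is submultiplicative, which closes the induction. *)

From Stdlib Require Import Reals Lra Lia List Classical ClassicalEpsilon
  FunctionalExtensionality PropExtensionality.
Import ListNotations.
Open Scope R_scope.

Lemma indic_true (P : Prop) : P -> indic P = 1.
Proof. intros H; unfold indic; destruct (excluded_middle_informative P); tauto. Qed.

Lemma indic_false (P : Prop) : ~ P -> indic P = 0.
Proof. intros H; unfold indic; destruct (excluded_middle_informative P); tauto. Qed.

Lemma indic_range (P : Prop) : 0 <= indic P <= 1.
Proof. unfold indic; destruct (excluded_middle_informative P); lra. Qed.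

Lemma indic_eq_sym {T : Type} (x y : T) : indic (x = y) = indic (y = x).
Proof.
  destruct (classic (x = y)) as [->|Hxy]; [reflexivity|].
  rewrite !indic_false; auto.
Qed.

Lemma sumR_cons (x : R) (l : list R) : sumR (x :: l) = x + sumR l.
Proof. reflexivity. Qed.

Lemma sumR_app (l1 l2 : list R) : sumR (l1 ++ l2) = sumR l1 + sumR l2.
Proof.
  induction l1 as [|x l1 IH]; [symmetry; apply Rplus_0_l|]. cbn [app]. rewrite !sumR_cons, IH. ring.
Qed.

Section SumR.
Context {X : Type}.
Implicit Types (f g : X -> R) (l : list X).

Lemma sumR_ext f g l :
  (forall x, In x l -> f x = g x) -> sumR (map f l) = sumR (map g l).
Proof. intros H; f_equal; apply map_ext_in; exact H. Qed.

Lemma sumR_le f g l :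
  (forall x, In x l -> f x <= g x) -> sumR (map f l) <= sumR (map g l).
Proof.
  induction l as [|x l IH]; cbn [map In]; intros H; [apply Rle_refl|].
  rewrite !sumR_cons. apply Rplus_le_compat; auto.
Qed.

Lemma sumR_nonneg f l : (forall x, In x l -> 0 <= f x) -> 0 <= sumR (map f l).
Proof.
  induction l as [|x l IH]; cbn [map In]; intros H; [apply Rle_refl|].
  rewrite sumR_cons. apply Rplus_le_le_0_compat; auto.
Qed.

Lemma sumR_zero f l : (forall x, In x l -> f x = 0) -> sumR (map f l) = 0.
Proof.
  induction l as [|x l IH]; cbn [map In]; intros H; [reflexivity|].
  rewrite sumR_cons, H, IH; auto; ring.
Qed.

Lemma sumR_scal_l (c : R) f l : sumR (map (fun x => c * f x) l) = c * sumR (map f l).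
Proof. induction l; cbn [map]; [cbn; ring|]. rewrite !sumR_cons, IHl. ring. Qed.

Lemma sumR_scal_r (c : R) f l : sumR (map (fun x => f x * c) l) = sumR (map f l) * c.
Proof. induction l; cbn [map]; [cbn; ring|]. rewrite !sumR_cons, IHl. ring. Qed.

Lemma sumR_plus f g l :
  sumR (map (fun x => f x + g x) l) = sumR (map f l) + sumR (map g l).
Proof. induction l; cbn [map]; [cbn; ring|]. rewrite !sumR_cons, IHl. ring. Qed.

Lemma sumR_minus f g l :
  sumR (map (fun x => f x - g x) l) = sumR (map f l) - sumR (map g l).
Proof. induction l; cbn [map]; [cbn; ring|]. rewrite !sumR_cons, IHl. ring. Qed.

Lemma sumR_elem_le f l x :
  (forall y, In y l -> 0 <= f y) -> In x l -> f x <= sumR (map f l).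
Proof.
  induction l as [|y l IH]; cbn [map In]; intros H Hx; [contradiction|].
  rewrite sumR_cons. destruct Hx as [<-|Hx].
  - assert (0 <= sumR (map f l)) by (apply sumR_nonneg; auto). lra.
  - assert (0 <= f y) by auto. assert (f x <= sumR (map f l)) by auto. lra.
Qed.

End SumR.

Lemma sumR_flat_map {X Y} (F : Y -> R) (g : X -> list Y) (l : list X) :
  sumR (map F (flat_map g l)) = sumR (map (fun x => sumR (map F (g x))) l).
Proof.
  induction l; cbn [map flat_map]; [reflexivity|].
  rewrite map_app, sumR_app, sumR_cons, IHl. reflexivity.
Qed.

Lemma sumR_mul {X Y} (f : X -> R) (g : Y -> R) (l : list X) (l' : list Y) :
  sumR (map (fun x => sumR (map (fun y => f x * g y) l')) l) =
  sumR (map f l) * sumR (map g l').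
Proof. rewrite <- sumR_scal_r. apply sumR_ext; intros. apply sumR_scal_l. Qed.

Lemma sumR_swap {X Y} (F : X -> Y -> R) (l : list X) (l' : list Y) :
  sumR (map (fun x => sumR (map (F x) l')) l) =
  sumR (map (fun y => sumR (map (fun x => F x y) l)) l').
Proof.
  induction l as [|x l IH]; cbn [map].
  - symmetry; apply sumR_zero; reflexivity.
  - rewrite sumR_cons, IH, <- sumR_plus. reflexivity.
Qed.

Lemma sumR_indic_NoDup {T : Type} (U : list T) (x : T) :
  NoDup U -> In x U -> sumR (map (fun u => indic (u = x)) U) = 1.
Proof.
  intros HU. induction HU as [|u U Hu HU IH]; cbn [In map]; [contradiction|].
  rewrite sumR_cons. intros [<-|Hx].
  - rewrite indic_true, sumR_zero; auto; [ring|].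
    intros v Hv. apply indic_false. intros ->. contradiction.
  - rewrite indic_false, IH; [ring|auto|]. intros <-. contradiction.
Qed.

Section InfSup.
Implicit Types (S T : R -> Prop).

Lemma Rinf1_spec S m :
  (exists x, S x) -> (forall x, S x -> m <= x) ->
  (forall x, S x -> Rinf1 S <= x) /\
  (forall m', (forall x, S x -> m' <= x) -> m' <= Rinf1 S).
Proof.
  intros Hne Hlb. unfold Rinf1.
  destruct (excluded_middle_informative _) as [H|H].
  - destruct (completeness _ _ _) as [l [Hub Hl]]; cbn. split.
    + intros x Sx. assert (- x <= l) by (apply Hub; rewrite Ropp_involutive; exact Sx). lra.
    + intros m' Hm'. assert (l <= - m'); [|lra].
      apply Hl. intros y Ey. specialize (Hm' _ Ey). lra.
  - exfalso. apply H. split.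
    + exists (- m). intros y Ey. specialize (Hlb _ Ey). lra.
    + destruct Hne as [x Sx]. exists (- x). rewrite Ropp_involutive. exact Sx.
Qed.

Lemma Rinf1_empty S : ~ (exists x, S x) -> Rinf1 S = 1.
Proof.
  intros H. unfold Rinf1. destruct (excluded_middle_informative _) as [H'|H']; auto.
  exfalso. destruct H' as [_ [y Ey]]. apply H. eauto.
Qed.

Lemma Rinf1_le_elem S m x : (forall y, S y -> m <= y) -> S x -> Rinf1 S <= x.
Proof. intros Hlb Sx. apply (Rinf1_spec S m); eauto. Qed.

Lemma Rinf1_ge S m : (forall x, S x -> m <= x) -> m <= 1 -> m <= Rinf1 S.
Proof.
  intros Hlb H1. destruct (classic (exists x, S x)) as [Hne|Hne].
  - apply (Rinf1_spec S m); auto.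
  - rewrite Rinf1_empty; auto.
Qed.

Lemma Rinf1_range S : (forall x, S x -> 0 <= x <= 1) -> 0 <= Rinf1 S <= 1.
Proof.
  intros H. split.
  - apply Rinf1_ge; [intros x Sx; apply H|]; auto; lra.
  - destruct (classic (exists x, S x)) as [[x Sx]|Hne].
    + apply Rle_trans with x; [apply (Rinf1_le_elem S 0)|]; auto; apply H; auto.
    + rewrite Rinf1_empty; auto; lra.
Qed.

Lemma Rinf1_approx S m eps :
  (exists x, S x) -> (forall x, S x -> m <= x) -> 0 < eps ->
  exists x, S x /\ x < Rinf1 S + eps.
Proof.
  intros Hne Hlb He. destruct (Rinf1_spec S m Hne Hlb) as [_ Hglb].
  apply NNPP. intros Hn. assert (Rinf1 S + eps <= Rinf1 S); [|lra].
  apply Hglb. intros x Sx. apply Rnot_lt_le. intros Hx. apply Hn. eauto.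
Qed.

Lemma Rinf1_le S T :
  (forall y, T y -> exists x, S x /\ x <= y) ->
  (forall x, S x -> 0 <= x <= 1) -> Rinf1 S <= Rinf1 T.
Proof.
  intros HST HS. apply Rinf1_ge; [|apply Rinf1_range; auto].
  intros y Ty. destruct (HST y Ty) as [x [Sx Hxy]].
  apply Rle_trans with x; auto. apply (Rinf1_le_elem S 0); auto. apply HS.
Qed.

Lemma Rsup0_spec S M :
  (exists x, S x) -> (forall x, S x -> x <= M) ->
  (forall x, S x -> x <= Rsup0 S) /\
  (forall M', (forall x, S x -> x <= M') -> Rsup0 S <= M').
Proof.
  intros Hne Hub. unfold Rsup0.
  destruct (excluded_middle_informative _) as [H|H].
  - destruct (completeness _ _ _) as [l [Hu Hl]]; cbn. split; auto.
  - exfalso. apply H. split; auto. exists M. intros x Sx; auto.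
Qed.

Lemma Rsup0_empty S : ~ (exists x, S x) -> Rsup0 S = 0.
Proof.
  intros H. unfold Rsup0. destruct (excluded_middle_informative _) as [H'|H']; auto.
  exfalso. destruct H' as [_ Hx]. tauto.
Qed.

Lemma Rsup0_le_ub S M : (forall x, S x -> x <= M) -> 0 <= M -> Rsup0 S <= M.
Proof.
  intros H H0. destruct (classic (exists x, S x)) as [Hne|Hne].
  - apply (Rsup0_spec S M); auto.
  - rewrite Rsup0_empty; auto.
Qed.

Lemma Rsup0_ge_elem S M x : (forall y, S y -> y <= M) -> S x -> x <= Rsup0 S.
Proof. intros Hub Sx. apply (Rsup0_spec S M); eauto. Qed.

Lemma Rsup0_range S : (forall x, S x -> 0 <= x <= 1) -> 0 <= Rsup0 S <= 1.
Proof.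
  intros H. split.
  - destruct (classic (exists x, S x)) as [[x Sx]|Hne].
    + apply Rle_trans with x; [apply H; auto|].
      apply (Rsup0_ge_elem S 1); auto. apply H.
    + rewrite Rsup0_empty; auto; lra.
  - apply Rsup0_le_ub; [intros; apply H|]; auto; lra.
Qed.

Lemma Rsup0_le S T :
  (forall x, S x -> exists y, T y /\ x <= y) ->
  (forall y, T y -> 0 <= y <= 1) -> Rsup0 S <= Rsup0 T.
Proof.
  intros HST HT. apply Rsup0_le_ub; [|apply Rsup0_range; auto].
  intros x Sx. destruct (HST x Sx) as [y [Ty Hxy]].
  apply Rle_trans with y; auto. apply (Rsup0_ge_elem T 1); auto. apply HT.
Qed.

End InfSup.

(** [prob_or x y] is the probability that at least one of two independent
    events of probabilities [x] and [y] occurs. *)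
Definition prob_or (x y : R) : R := 1 - (1 - x) * (1 - y).

Lemma prob_or_le (x y x' y' : R) :
  x <= x' <= 1 -> y <= y' <= 1 -> prob_or x y <= prob_or x' y'.
Proof. unfold prob_or. intros. nra. Qed.

Lemma Rinf1_le_prob_or (S1 S2 T : R -> Prop) :
  (forall x, S1 x -> 0 <= x <= 1) -> (forall x, S2 x -> 0 <= x <= 1) ->
  (forall x, T x -> 0 <= x <= 1) ->
  (forall x1 x2, S1 x1 -> S2 x2 -> exists y, T y /\ y <= prob_or x1 x2) ->
  Rinf1 T <= prob_or (Rinf1 S1) (Rinf1 S2).
Proof.
  intros H1 H2 HT HST. unfold prob_or.
  assert (RT := Rinf1_range T HT).
  destruct (classic (exists x, S1 x)) as [NE1|NE1];
    [|rewrite (Rinf1_empty S1 NE1); lra].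
  destruct (classic (exists x, S2 x)) as [NE2|NE2];
    [|rewrite (Rinf1_empty S2 NE2); lra].
  assert (R1 := Rinf1_range S1 H1). assert (R2 := Rinf1_range S2 H2).
  apply Rle_plus_epsilon. intros eps Heps.
  destruct (Rinf1_approx S1 0 (eps / 2) NE1) as [x1 [S1x1 Hx1]]; [intros; apply H1; auto|lra|].
  destruct (Rinf1_approx S2 0 (eps / 2) NE2) as [x2 [S2x2 Hx2]]; [intros; apply H2; auto|lra|].
  destruct (HST x1 x2 S1x1 S2x2) as [y [Ty Hy]]. unfold prob_or in Hy.
  assert (Rinf1 T <= y) by (apply (Rinf1_le_elem T 0); auto; apply HT).
  pose proof (H1 x1 S1x1). pose proof (H2 x2 S2x2). nra.
Qed.

Section Distributions.
Context {A : Type}.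
Implicit Types (t u v : term A) (p : dist A) (l : list (R * term A)) (w : coupling A).

Lemma closed_Par_inv (B : A -> Prop) t1 t2 :
  closed_term (Par B t1 t2) -> closed_term t1 /\ closed_term t2.
Proof. intros [Hw Hg]. inversion Hw; inversion Hg; subst. split; split; auto. Qed.

Lemma closed_Par (B : A -> Prop) t1 t2 :
  closed_term t1 -> closed_term t2 -> closed_term (Par B t1 t2).
Proof. intros [] []; split; constructor; auto. Qed.

Lemma closed_Plus_inv t1 t2 : closed_term (Plus t1 t2) -> closed_term t1 /\ closed_term t2.
Proof. intros [Hw Hg]. inversion Hw; inversion Hg; subst. split; split; auto. Qed.

Lemma closed_Pref_inv (a : A) (q : list R) (ts : list (term A)) :
  closed_term (Pref a q ts) ->
  valid_probs q /\ length q = length ts /\ Forall closed_term ts.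
Proof.
  intros [Hw Hg]. inversion Hw; inversion Hg; subst. do 2 (split; [assumption|]).
  rewrite Forall_forall in *. intros u Hu. split; auto.
Qed.

Definition mass l : dist A := fun u => sumR (map (fun e => fst e * indic (u = snd e)) l).

Definition fin_dist p : Prop :=
  exists l, Forall (fun e => 0 <= fst e /\ closed_term (snd e)) l /\
    sumR (map fst l) = 1 /\ forall u, p u = mass l u.

Lemma mass_support l u : mass l u <> 0 -> In u (map snd l).
Proof.
  intros H. apply NNPP; intros Hn. apply H. apply sumR_zero.
  intros e He. rewrite indic_false; [ring|]. intros ->. apply Hn, in_map, He.
Qed.

Lemma mass_ge_weight l e :
  Forall (fun e => 0 <= fst e) l -> In e l -> fst e <= mass l (snd e).
Proof.
  intros Hl He. rewrite Forall_forall in Hl.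
  eapply Rle_trans; [|apply (sumR_elem_le (fun e' => fst e' * indic (snd e = snd e')) l e)].
  - rewrite indic_true; [lra|reflexivity].
  - intros e' He'. apply Rmult_le_pos; [apply Hl; auto|apply indic_range].
  - exact He.
Qed.

Lemma mass_total_le l l' :
  Forall (fun e => 0 <= fst e) l -> Forall (fun e => 0 <= fst e) l' ->
  (forall u, mass l u <= mass l' u) -> sumR (map fst l) <= sumR (map fst l').
Proof.
  intros Hl0 Hl' Hle. assert (Hl := Hl0). rewrite Forall_forall in Hl, Hl'.
  set (U := nodup (fun x y => excluded_middle_informative (x = y)) (map snd l')).
  assert (HU : forall e', In e' l' -> sumR (map (fun u => indic (u = snd e')) U) = 1).
  { intros e' He'. apply sumR_indic_NoDup; [apply NoDup_nodup|]. apply nodup_In, in_map, He'. }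
  (* Both totals are sums of pointwise masses over the support [U] of [l']:
     every atom of [l] with positive weight lies in [U]. *)
  apply Rle_trans with
    (sumR (map (fun e => fst e * sumR (map (fun u => indic (u = snd e)) U)) l)).
  { apply sumR_le. intros e He. pose proof (Hl e He) as He0.
    destruct (Rle_lt_dec (fst e) 0) as [Hzero|Hpos].
    { replace (fst e) with 0 by lra. rewrite Rmult_0_l; apply Rle_refl. }
    assert (Hin : In (snd e) (map snd l')).
    { apply mass_support. intros H0. specialize (Hle (snd e)). rewrite H0 in Hle.
      pose proof (mass_ge_weight l e Hl0 He). lra. }
    apply nodup_In with (decA := fun x y => excluded_middle_informative (x = y)) in Hin.
    rewrite sumR_indic_NoDup by (auto; apply NoDup_nodup). lra. }
  rewrite (sumR_ext _ (fun e' => fst e' * sumR (map (fun u => indic (u = snd e')) U)) l')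
    by (intros; rewrite HU; auto; ring).
  rewrite (sumR_ext (fun e => fst e * _) (fun e => sumR (map (fun u => fst e * indic (u = snd e)) U)) l)
    by (intros; symmetry; apply sumR_scal_l).
  rewrite (sumR_ext (fun e' => fst e' * _) (fun e' => sumR (map (fun u => fst e' * indic (u = snd e')) U)) l')
    by (intros; symmetry; apply sumR_scal_l).
  rewrite sumR_swap, (sumR_swap _ l'). apply sumR_le. intros u _. apply Hle.
Qed.

Lemma indic_Par_eq (B B' : A -> Prop) u1 u2 v1 v2 :
  indic (Par B' u1 u2 = Par B v1 v2) = indic (B' = B) * indic (u1 = v1) * indic (u2 = v2).
Proof.
  destruct (classic (B' = B)) as [<-|HB]; [destruct (classic (u1 = v1)) as [<-|H1];
    [destruct (classic (u2 = v2)) as [<-|H2]|]|].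
  - rewrite !indic_true; auto; ring.
  - rewrite (indic_false (u2 = v2)), indic_false by congruence; ring.
  - rewrite (indic_false (u1 = v1)), indic_false by congruence; ring.
  - rewrite (indic_false (B' = B)), indic_false by congruence; ring.
Qed.

Lemma sumR_indic_Par {X Y} (B : A -> Prop) (l1 : list X) (l2 : list Y)
    (f1 : X -> R) (g1 : X -> term A) (f2 : Y -> R) (g2 : Y -> term A) u :
  sumR (map (fun x => sumR (map (fun y => f1 x * f2 y * indic (u = Par B (g1 x) (g2 y))) l2)) l1)
  = par_dist B (fun v => sumR (map (fun x => f1 x * indic (v = g1 x)) l1))
               (fun v => sumR (map (fun y => f2 y * indic (v = g2 y)) l2)) u.
Proof.
  destruct u as [| | | |B' u1 u2]; cbn [par_dist];
    try (apply sumR_zero; intros; apply sumR_zero; intros;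
         rewrite indic_false; [ring|discriminate]).
  transitivity (sumR (map (fun x => sumR (map (fun y =>
     (indic (B' = B) * (f1 x * indic (u1 = g1 x))) * (f2 y * indic (u2 = g2 y))) l2)) l1)).
  - apply sumR_ext; intros x _. apply sumR_ext; intros y _. rewrite indic_Par_eq. ring.
  - rewrite sumR_mul, sumR_scal_l. ring.
Qed.

Definition mass_Par (B : A -> Prop) l1 l2 : list (R * term A) :=
  flat_map (fun e1 => map (fun e2 => (fst e1 * fst e2, Par B (snd e1) (snd e2))) l2) l1.

Lemma mass_ParE (B : A -> Prop) l1 l2 u :
  mass (mass_Par B l1 l2) u = par_dist B (mass l1) (mass l2) u.
Proof.
  unfold mass, mass_Par. rewrite sumR_flat_map.
  rewrite <- (sumR_indic_Par B l1 l2 fst snd fst snd). apply sumR_ext; intros.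
  rewrite map_map. reflexivity.
Qed.

Lemma fin_dist_dirac t : closed_term t -> fin_dist (dirac t).
Proof.
  intros Ht. exists [(1, t)]. repeat split.
  - constructor; [cbn; split; [lra|exact Ht]|constructor].
  - cbn; ring.
  - intros u. unfold mass, dirac. cbn; ring.
Qed.

Lemma fin_dist_par (B : A -> Prop) p1 p2 :
  fin_dist p1 -> fin_dist p2 -> fin_dist (par_dist B p1 p2).
Proof.
  intros [l1 [H1 [S1 E1]]] [l2 [H2 [S2 E2]]]. exists (mass_Par B l1 l2). repeat split.
  - rewrite Forall_forall in *. intros [r v] Hin. unfold mass_Par in Hin.
    apply in_flat_map in Hin as [e1 [Hin1 Hin]].
    apply in_map_iff in Hin as [e2 [Heq Hin2]]. injection Heq as <- <-.
    destruct (H1 _ Hin1), (H2 _ Hin2).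
    split; [apply Rmult_le_pos|apply closed_Par]; auto.
  - unfold mass_Par. rewrite sumR_flat_map.
    rewrite (sumR_ext _ (fun e1 => sumR (map (fun e2 => fst e1 * fst e2) l2)))
      by (intros; rewrite map_map; reflexivity).
    rewrite sumR_mul, S1, S2. ring.
  - intros u. rewrite mass_ParE. destruct u; cbn; auto. rewrite E1, E2. reflexivity.
Qed.

Lemma map_fst_combine {X Y} (q : list X) (ts : list Y) :
  length q = length ts -> map fst (combine q ts) = q.
Proof.
  revert ts; induction q; intros [|t ts] H; cbn in *; try discriminate; auto.
  f_equal; auto.
Qed.

Lemma fin_dist_step t a p : step t a p -> closed_term t -> fin_dist p.
Proof.
  induction 1 as [a q ts| | |B t1 t2 a p1 p2| B t1 t2 a p1| B t1 t2 a p2]; intros Hc.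
  - apply closed_Pref_inv in Hc as [[_ [Hq Hsum]] [Hlen Hts]].
    exists (combine q ts). split; [|split; [rewrite map_fst_combine; auto|reflexivity]].
    rewrite Forall_forall in *. intros [r v] Hin. split.
    + assert (0 < r <= 1) by exact (Hq r (in_combine_l _ _ _ _ Hin)). cbn; lra.
    + exact (Hts v (in_combine_r _ _ _ _ Hin)).
  - apply IHstep, (closed_Plus_inv _ _ Hc).
  - apply IHstep, (closed_Plus_inv _ _ Hc).
  - apply closed_Par_inv in Hc. apply fin_dist_par; tauto.
  - apply closed_Par_inv in Hc. apply fin_dist_par; [tauto|apply fin_dist_dirac; tauto].
  - apply closed_Par_inv in Hc. apply fin_dist_par; [apply fin_dist_dirac; tauto|tauto].
Qed.

Definition left_mass w : list (R * term A) := map (fun e => (snd e, fst (fst e))) w.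
Definition right_mass w : list (R * term A) := map (fun e => (snd e, snd (fst e))) w.

Lemma marg1_left_mass w u : marg1 w u = mass (left_mass w) u.
Proof.
  unfold marg1, mass, left_mass. rewrite map_map. apply sumR_ext; intros.
  cbn. rewrite indic_eq_sym. reflexivity.
Qed.

Lemma marg2_right_mass w u : marg2 w u = mass (right_mass w) u.
Proof.
  unfold marg2, mass, right_mass. rewrite map_map. apply sumR_ext; intros.
  cbn. rewrite indic_eq_sym. reflexivity.
Qed.

Lemma coupling_weight_le1 p p' w : fin_dist p -> is_coupling p p' w -> sumR (map snd w) <= 1.
Proof.
  intros [l [Hl [Sl El]]] [Hw [H1 _]]. rewrite <- Sl.
  replace (map snd w) with (map fst (left_mass w))
    by (unfold left_mass; rewrite map_map; reflexivity).
  apply mass_total_le.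
  - unfold left_mass. rewrite Forall_map. exact Hw.
  - eapply Forall_impl; [|exact Hl]. cbn; tauto.
  - intros u. rewrite <- marg1_left_mass, H1, El. apply Rle_refl.
Qed.

Lemma mass_closed l u :
  Forall (fun e => 0 <= fst e /\ closed_term (snd e)) l -> mass l u <> 0 -> closed_term u.
Proof.
  intros Hl Hu. apply mass_support, in_map_iff in Hu as [e [<- He]].
  rewrite Forall_forall in Hl. apply Hl, He.
Qed.

Lemma coupling_support_closed p p' w :
  fin_dist p -> fin_dist p' -> is_coupling p p' w -> forall e, In e w ->
  snd e = 0 \/ (closed_term (fst (fst e)) /\ closed_term (snd (fst e))).
Proof.
  intros [l [Hl [_ El]]] [l' [Hl' [_ El']]] [Hw [H1 H2]] e He.
  destruct (Req_dec (snd e) 0) as [|Hne]; [left; assumption|right].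
  rewrite Forall_forall in Hw. assert (Hpos : 0 < snd e) by (pose proof (Hw e He); lra).
  split.
  - apply (mass_closed l); auto. rewrite <- El, <- H1, marg1_left_mass.
    enough (snd e <= mass (left_mass w) (fst (fst e))) by lra.
    apply (mass_ge_weight _ (snd e, fst (fst e))).
    + unfold left_mass. rewrite Forall_map, Forall_forall. exact Hw.
    + apply in_map_iff. eauto.
  - apply (mass_closed l'); auto. rewrite <- El', <- H2, marg2_right_mass.
    enough (snd e <= mass (right_mass w) (snd (fst e))) by lra.
    apply (mass_ge_weight _ (snd e, snd (fst e))).
    + unfold right_mass. rewrite Forall_map, Forall_forall. exact Hw.
    + apply in_map_iff. eauto.
Qed.

Section Kantorovich.
Variable dd : term A -> term A -> R.
Hypothesis dd_unit : unit_valued dd.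

Lemma cost_range p p' w :
  fin_dist p -> fin_dist p' -> is_coupling p p' w -> 0 <= cost dd w <= 1.
Proof.
  intros Hp Hp' Hc. pose proof (coupling_weight_le1 _ _ _ Hp Hc) as HW.
  pose proof (coupling_support_closed _ _ _ Hp Hp' Hc) as Hcl.
  destruct Hc as [Hw _]. rewrite Forall_forall in Hw.
  assert (Hterm : forall e, In e w -> 0 <= snd e * dd (fst (fst e)) (snd (fst e)) <= snd e).
  { intros e He. pose proof (Hw e He). destruct (Hcl e He) as [->|[H1 H2]]; [lra|].
    pose proof (dd_unit _ _ H1 H2). split; nra. }
  unfold cost. split.
  - apply sumR_nonneg. intros e He. apply Hterm, He.
  - eapply Rle_trans; [|exact HW]. apply sumR_le. intros e He. apply Hterm, He.
Qed.

Lemma Kant_range p p' : fin_dist p -> fin_dist p' -> 0 <= Kant dd p p' <= 1.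
Proof.
  intros Hp Hp'. apply Rinf1_range. intros c [w [Hw ->]]. apply (cost_range p p'); auto.
Qed.

Lemma Kant_le_cost p p' w :
  fin_dist p -> fin_dist p' -> is_coupling p p' w -> Kant dd p p' <= cost dd w.
Proof.
  intros Hp Hp' Hw. apply (Rinf1_le_elem _ 0); [|eauto].
  intros c [w' [Hw' ->]]. apply (cost_range p p'); auto.
Qed.

Lemma Kant_mono (dd' : term A -> term A -> R) p p' :
  (forall t t', closed_term t -> closed_term t' -> dd t t' <= dd' t t') ->
  fin_dist p -> fin_dist p' -> Kant dd p p' <= Kant dd' p p'.
Proof.
  intros Hle Hp Hp'. apply Rinf1_le.
  - intros y [w [Hw ->]]. exists (cost dd w). split; [eauto|].
    pose proof (coupling_support_closed _ _ _ Hp Hp' Hw) as Hcl.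
    destruct Hw as [Hw _]. rewrite Forall_forall in Hw.
    apply sumR_le. intros e He. pose proof (Hw e He).
    destruct (Hcl e He) as [->|[H1 H2]]; [lra|]. pose proof (Hle _ _ H1 H2). nra.
  - intros c [w [Hw ->]]. apply (cost_range p p'); auto.
Qed.

End Kantorovich.

Lemma der_fin_dist t a p : closed_term t -> der t a p -> fin_dist p.
Proof. intros Ht Hp. exact (fin_dist_step t a p Hp Ht). Qed.

Lemma Haus_le (h : dist A -> dist A -> R) (P1 P2 : dist A -> Prop) c : 0 <= c ->
  (forall p1, P1 p1 -> Rinf1 (fun s => exists p2, P2 p2 /\ s = h p1 p2) <= c) ->
  (forall p2, P2 p2 -> Rinf1 (fun s => exists p1, P1 p1 /\ s = h p2 p1) <= c) ->
  Haus h P1 P2 <= c.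
Proof.
  intros Hc H1 H2. unfold Haus.
  apply Rmax_lub; apply Rsup0_le_ub; try exact Hc; intros r [p [Hp ->]]; auto.
Qed.

Lemma Bfun_le dd t t' c : 0 <= c ->
  (forall a, Haus (Kant dd) (der t a) (der t' a) <= c) -> Bfun dd t t' <= c.
Proof. intros Hc H. apply Rsup0_le_ub; auto. intros r [a ->]. apply H. Qed.

Section Functional.
Variable dd : term A -> term A -> R.
Hypothesis dd_unit : unit_valued dd.

Lemma Haus_Kant_range (P1 P2 : dist A -> Prop) :
  (forall p, P1 p -> fin_dist p) -> (forall p, P2 p -> fin_dist p) ->
  0 <= Haus (Kant dd) P1 P2 <= 1.
Proof.
  intros H1 H2. unfold Haus.
  assert (Hside : forall Q1 Q2 : dist A -> Prop,
    (forall p, Q1 p -> fin_dist p) -> (forall p, Q2 p -> fin_dist p) ->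
    0 <= Rsup0 (fun r => exists p1, Q1 p1 /\
           r = Rinf1 (fun s => exists p2, Q2 p2 /\ s = Kant dd p1 p2)) <= 1).
  { intros Q1 Q2 HQ1 HQ2. apply Rsup0_range. intros r [p1 [Hp1 ->]].
    apply Rinf1_range. intros s [p2 [Hp2 ->]]. apply Kant_range; auto. }
  pose proof (Hside P1 P2 H1 H2). pose proof (Hside P2 P1 H2 H1).
  unfold Rmax. destruct (Rle_dec _ _); lra.
Qed.

Lemma Bfun_range t t' : closed_term t -> closed_term t' -> 0 <= Bfun dd t t' <= 1.
Proof.
  intros Ht Ht'. apply Rsup0_range. intros r [a ->].
  apply Haus_Kant_range; intros p; apply der_fin_dist; auto.
Qed.

Lemma Bfun_unit : unit_valued (Bfun dd).
Proof. intros t t' Ht Ht'. apply Bfun_range; auto. Qed.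

End Functional.

Lemma Bfun_mono (dd dd' : term A -> term A -> R) t t' :
  unit_valued dd -> unit_valued dd' ->
  (forall u u', closed_term u -> closed_term u' -> dd u u' <= dd' u u') ->
  closed_term t -> closed_term t' -> Bfun dd t t' <= Bfun dd' t t'.
Proof.
  intros Hu Hu' Hle Ht Ht'.
  assert (HK : forall P1 P2 : dist A -> Prop, (forall p, P1 p -> fin_dist p) ->
      (forall p, P2 p -> fin_dist p) ->
      Rsup0 (fun r => exists p1, P1 p1 /\
        r = Rinf1 (fun s => exists p2, P2 p2 /\ s = Kant dd p1 p2)) <=
      Rsup0 (fun r => exists p1, P1 p1 /\
        r = Rinf1 (fun s => exists p2, P2 p2 /\ s = Kant dd' p1 p2))).
  { intros P1 P2 H1 H2. apply Rsup0_le.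
    - intros r [p1 [Hp1 ->]]. eexists; split; [exists p1; split; [exact Hp1|reflexivity]|].
      apply Rinf1_le.
      + intros y [p2 [Hp2 ->]]. exists (Kant dd p1 p2).
        split; [eauto|apply Kant_mono; auto].
      + intros x [p2 [Hp2 ->]]. apply (Kant_range dd); auto.
    - intros r [p1 [Hp1 ->]]. apply Rinf1_range. intros s [p2 [Hp2 ->]].
      apply (Kant_range dd'); auto. }
  apply Rsup0_le.
  - intros r [a ->]. eexists; split; [exists a; reflexivity|].
    unfold Haus. eapply Rle_trans; [apply Rle_max_compat_r|apply Rle_max_compat_l];
      apply HK; intros p; apply der_fin_dist; auto.
  - intros r [a ->]. apply (Haus_Kant_range dd'); auto; intros p; apply der_fin_dist; auto.
Qed.

Definition B_prefixed (dd : term A -> term A -> R) : Prop :=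
  forall t t', closed_term t -> closed_term t' -> Bfun dd t t' <= dd t t'.

Section BisimMetric.
Variable d : term A -> term A -> R.
Hypothesis Hd : is_bisim_metric d.

Let d_unit : unit_valued d := proj1 Hd.
Let d_fix : fixpoint_B d := proj1 (proj2 Hd).

(** Knaster-Tarski: the pointwise infimum of all prefixed points is a fixed
    point, so the least fixed point lies below every prefixed point. *)
Lemma bisim_metric_le_prefixed (d' : term A -> term A -> R) :
  unit_valued d' -> B_prefixed d' ->
  forall t t', closed_term t -> closed_term t' -> d t t' <= d' t t'.
Proof.
  intros Hu' Hp'.
  set (ds := fun t t' : term A => Rinf1 (fun c => exists dd : term A -> term A -> R,
               unit_valued dd /\ B_prefixed dd /\ c = dd t t')).
  assert (Hds_unit : unit_valued ds).
  { intros t t' Ht Ht'. apply Rinf1_range. intros c [dd [Hu [_ ->]]]. auto. }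
  assert (Hds_le : forall dd, unit_valued dd -> B_prefixed dd ->
            forall t t', closed_term t -> closed_term t' -> ds t t' <= dd t t').
  { intros dd Hu Hp t t' Ht Ht'. apply (Rinf1_le_elem _ 0); [|eauto].
    intros c [dd' [Hu'' [_ ->]]]. apply Hu''; auto. }
  assert (Hds_pre : B_prefixed ds).
  { intros t t' Ht Ht'. apply Rinf1_ge; [|apply Bfun_range; auto].
    intros c [dd [Hu [Hp ->]]]. eapply Rle_trans; [|apply Hp; auto].
    apply Bfun_mono; auto. }
  assert (Hds_fix : fixpoint_B ds).
  { intros t t' Ht Ht'. apply Rle_antisym; [apply Hds_pre; auto|].
    apply Hds_le; auto using Bfun_unit.
    intros u u' Hu Hu''. apply Bfun_mono; auto using Bfun_unit. }
  intros t t' Ht Ht'. apply Rle_trans with (ds t t'); [|apply Hds_le; auto].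
  apply (proj2 (proj2 Hd)); auto.
Qed.

Lemma bisim_metric_sym t t' : closed_term t -> closed_term t' -> d t t' = d t' t.
Proof.
  intros Ht Ht'. rewrite <- (d_fix t t'), <- (d_fix t' t) by auto.
  unfold Bfun. f_equal. apply functional_extensionality. intros r.
  apply propositional_extensionality. split; intros [a ->]; exists a; apply Rmax_comm.
Qed.

Lemma bisim_metric_match t t' a p :
  closed_term t -> closed_term t' -> step t a p ->
  Rinf1 (fun s => exists p', der t' a p' /\ s = Kant d p p') <= d t t'.
Proof.
  intros Ht Ht' Hp. rewrite <- (d_fix t t' Ht Ht').
  assert (Hinf_range : forall p1, fin_dist p1 ->
    0 <= Rinf1 (fun s => exists p2, der t' a p2 /\ s = Kant d p1 p2) <= 1).
  { intros p1 Hp1. apply Rinf1_range. intros s [p2 [Hp2 ->]].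
    apply Kant_range; eauto using der_fin_dist. }
  apply Rle_trans with (Haus (Kant d) (der t a) (der t' a)).
  - unfold Haus. eapply Rle_trans; [|apply Rmax_l]. apply (Rsup0_ge_elem _ 1).
    + intros r [p1 [Hp1 ->]]. pose proof (Hinf_range p1 (der_fin_dist _ _ _ Ht Hp1)). lra.
    + exists p; split; auto.
  - apply (Rsup0_ge_elem _ 1); [|exists a; reflexivity].
    intros r [b ->]. apply Haus_Kant_range; auto; intros q; apply der_fin_dist; auto.
Qed.

Lemma bisim_metric_Nil : d Nil Nil <= 0.
Proof.
  assert (Hc : @closed_term A Nil) by (split; constructor).
  rewrite <- (d_fix _ _ Hc Hc). apply Bfun_le; [lra|]. intros a.
  apply Haus_le; [lra| |]; intros p Hp; inversion Hp.
Qed.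

Definition prod_coupling (B : A -> Prop) (w1 w2 : coupling A) : coupling A :=
  flat_map (fun e1 => map (fun e2 => (Par B (fst (fst e1)) (fst (fst e2)),
                                      Par B (snd (fst e1)) (snd (fst e2)),
                                      snd e1 * snd e2)) w2) w1.

Lemma par_dist_ext (B : A -> Prop) p1 p1' p2 p2' u :
  (forall v, p1 v = p1' v) -> (forall v, p2 v = p2' v) ->
  par_dist B p1 p2 u = par_dist B p1' p2' u.
Proof. intros H1 H2. destruct u; cbn; auto. rewrite H1, H2. reflexivity. Qed.

Lemma prod_coupling_coupling (B : A -> Prop) p1 r1 p2 r2 w1 w2 :
  is_coupling p1 r1 w1 -> is_coupling p2 r2 w2 ->
  is_coupling (par_dist B p1 p2) (par_dist B r1 r2) (prod_coupling B w1 w2).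
Proof.
  intros [Hw1 [H11 H12]] [Hw2 [H21 H22]]. split; [|split].
  - rewrite Forall_forall in *. intros x Hx. unfold prod_coupling in Hx.
    apply in_flat_map in Hx as [e [He Hx]]. apply in_map_iff in Hx as [e' [<- He']].
    apply Rmult_le_pos; auto.
  - intros u. unfold marg1, prod_coupling. rewrite sumR_flat_map.
    transitivity (sumR (map (fun x => sumR (map (fun y => snd x * snd y *
       indic (u = Par B (fst (fst x)) (fst (fst y)))) w2)) w1)).
    + apply sumR_ext; intros; rewrite map_map; apply sumR_ext; intros.
      cbn. rewrite indic_eq_sym. ring.
    + rewrite sumR_indic_Par. apply par_dist_ext; intros v; [rewrite <- H11|rewrite <- H21];
        unfold marg1; apply sumR_ext; intros; rewrite indic_eq_sym; ring.
  - intros u. unfold marg2, prod_coupling. rewrite sumR_flat_map.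
    transitivity (sumR (map (fun x => sumR (map (fun y => snd x * snd y *
       indic (u = Par B (snd (fst x)) (snd (fst y)))) w2)) w1)).
    + apply sumR_ext; intros; rewrite map_map; apply sumR_ext; intros.
      cbn. rewrite indic_eq_sym. ring.
    + rewrite sumR_indic_Par. apply par_dist_ext; intros v; [rewrite <- H12|rewrite <- H22];
        unfold marg2; apply sumR_ext; intros; rewrite indic_eq_sym; ring.
Qed.

Lemma cost_prod_coupling_le (B : A -> Prop) (dd dd' : term A -> term A -> R) w1 w2 :
  (forall x1 x2 y1 y2, dd' (Par B x1 x2) (Par B y1 y2) <= prob_or (dd x1 y1) (dd x2 y2)) ->
  Forall (fun e => 0 <= snd e) w1 -> Forall (fun e => 0 <= snd e) w2 ->
  sumR (map snd w1) <= 1 -> sumR (map snd w2) <= 1 ->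
  0 <= cost dd w1 -> 0 <= cost dd w2 ->
  cost dd' (prod_coupling B w1 w2) <= prob_or (cost dd w1) (cost dd w2).
Proof.
  intros Hdd' Hw1 Hw2 W1 W2 C1 C2. rewrite Forall_forall in Hw1, Hw2.
  set (c := fun e : term A * term A * R => snd e * dd (fst (fst e)) (snd (fst e))).
  unfold cost at 1, prod_coupling. rewrite sumR_flat_map.
  apply Rle_trans with (sumR (map (fun x => sumR (map (fun y =>
      c x * snd y + snd x * c y - c x * c y) w2)) w1)).
  - apply sumR_le. intros x Hx. rewrite map_map. apply sumR_le. intros y Hy. cbn.
    assert (H := Hdd' (fst (fst x)) (fst (fst y)) (snd (fst x)) (snd (fst y))).
    unfold c, prob_or in *. pose proof (Hw1 x Hx). pose proof (Hw2 y Hy).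
    assert (0 <= snd x * snd y) by (apply Rmult_le_pos; auto). nra.
  - rewrite (sumR_ext _ (fun x => sumR (map (fun y => c x * snd y) w2)
        + sumR (map (fun y => snd x * c y) w2) - sumR (map (fun y => c x * c y) w2)))
      by (intros; rewrite <- sumR_plus, <- sumR_minus; reflexivity).
    rewrite sumR_minus, sumR_plus, !sumR_mul.
    change (sumR (map c w1)) with (cost dd w1). change (sumR (map c w2)) with (cost dd w2).
    unfold prob_or.
    (* the total weights of both couplings are at most 1 *)
    assert (0 <= cost dd w1 * (1 - sumR (map snd w2))) by (apply Rmult_le_pos; lra).
    assert (0 <= cost dd w2 * (1 - sumR (map snd w1))) by (apply Rmult_le_pos; lra).
    nra.
Qed.

Lemma Kant_par_le (B : A -> Prop) (dd dd' : term A -> term A -> R) p1 p2 r1 r2 :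
  unit_valued dd -> unit_valued dd' ->
  (forall x1 x2 y1 y2, dd' (Par B x1 x2) (Par B y1 y2) <= prob_or (dd x1 y1) (dd x2 y2)) ->
  fin_dist p1 -> fin_dist p2 -> fin_dist r1 -> fin_dist r2 ->
  Kant dd' (par_dist B p1 p2) (par_dist B r1 r2) <= prob_or (Kant dd p1 r1) (Kant dd p2 r2).
Proof.
  intros Hu Hu' Hdd' Hp1 Hp2 Hr1 Hr2.
  assert (Hp : fin_dist (par_dist B p1 p2)) by (apply fin_dist_par; auto).
  assert (Hr : fin_dist (par_dist B r1 r2)) by (apply fin_dist_par; auto).
  apply Rinf1_le_prob_or.
  - intros c [w [Hw ->]]. apply (cost_range dd Hu p1 r1); auto.
  - intros c [w [Hw ->]]. apply (cost_range dd Hu p2 r2); auto.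
  - intros c [w [Hw ->]]. apply (cost_range dd' Hu' _ _ _ Hp Hr Hw).
  - intros c1 c2 [w1 [Hw1 ->]] [w2 [Hw2 ->]].
    exists (cost dd' (prod_coupling B w1 w2)). split.
    + exists (prod_coupling B w1 w2). split; [apply prod_coupling_coupling|]; auto.
    + apply cost_prod_coupling_le; auto.
      * apply Hw1.
      * apply Hw2.
      * apply (coupling_weight_le1 p1 r1); auto.
      * apply (coupling_weight_le1 p2 r2); auto.
      * apply (cost_range dd Hu p1 r1); auto.
      * apply (cost_range dd Hu p2 r2); auto.
Qed.

Definition par_cap (dd : term A -> term A -> R) (u u' : term A) : R :=
  match u, u' with
  | Par B1 u1 u2, Par B2 v1 v2 =>
      if excluded_middle_informative (B1 = (fun _ => True) /\ B2 = (fun _ => True))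
      then prob_or (dd u1 v1) (dd u2 v2) else 1
  | _, _ => 1
  end.

(** [d_par] is a prefixed point of the bisimulation functional, hence above [d];
    on pairs of full parallel compositions it is at most [prob_or] of the
    componentwise distances. *)
Definition d_par (u u' : term A) : R := Rmin (d u u') (par_cap d u u').

Lemma d_par_Par x1 x2 y1 y2 :
  d_par (Par (fun _ => True) x1 x2) (Par (fun _ => True) y1 y2) <= prob_or (d x1 y1) (d x2 y2).
Proof.
  unfold d_par. eapply Rle_trans; [apply Rmin_r|]. cbn.
  destruct (excluded_middle_informative _) as [_|H]; [lra|]. tauto.
Qed.

Lemma d_par_unit : unit_valued d_par.
Proof.
  intros u u' Hu Hu'. unfold d_par. pose proof (d_unit u u' Hu Hu').
  assert (0 <= par_cap d u u' <= 1).
  { destruct u as [| | | |B1 u1 u2]; destruct u' as [| | | |B2 v1 v2]; cbn; try lra.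
    destruct (excluded_middle_informative _); [|lra].
    apply closed_Par_inv in Hu as [Hu1 Hu2]; apply closed_Par_inv in Hu' as [Hv1 Hv2].
    pose proof (d_unit u1 v1 Hu1 Hv1). pose proof (d_unit u2 v2 Hu2 Hv2).
    unfold prob_or. split; nra. }
  unfold Rmin; destruct (Rle_dec _ _); lra.
Qed.

Lemma d_par_match x1 x2 y1 y2 a p :
  closed_term x1 -> closed_term x2 -> closed_term y1 -> closed_term y2 ->
  step (Par (fun _ => True) x1 x2) a p ->
  Rinf1 (fun s => exists p', der (Par (fun _ => True) y1 y2) a p' /\ s = Kant d_par p p')
  <= prob_or (d x1 y1) (d x2 y2).
Proof.
  intros Hx1 Hx2 Hy1 Hy2 Hst.
  inversion Hst as [| | |B t1 t2 a' p1 p2 _ Hs1 Hs2|B t1 t2 a' p1 HnB _|B t1 t2 a' p2 HnB _];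
    subst; try (exfalso; apply HnB; exact I).
  assert (Hp1 : fin_dist p1) by (eapply fin_dist_step; eauto).
  assert (Hp2 : fin_dist p2) by (eapply fin_dist_step; eauto).
  assert (HY : closed_term (Par (fun _ : A => True) y1 y2)) by (apply closed_Par; auto).
  eapply Rle_trans; [|apply prob_or_le; split;
    [apply (bisim_metric_match x1 y1 a p1)|apply d_unit| apply (bisim_metric_match x2 y2 a p2)|apply d_unit]];
    auto.
  apply Rinf1_le_prob_or.
  - intros s [r [Hr ->]]. apply Kant_range; eauto using der_fin_dist.
  - intros s [r [Hr ->]]. apply Kant_range; eauto using der_fin_dist.
  - intros s [r [Hr ->]]. apply Kant_range; [apply d_par_unit|apply fin_dist_par; auto|].
    eapply der_fin_dist; eauto.
  - intros k1 k2 [r1 [Hr1 ->]] [r2 [Hr2 ->]].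
    exists (Kant d_par (par_dist (fun _ => True) p1 p2) (par_dist (fun _ => True) r1 r2)).
    split; [exists (par_dist (fun _ => True) r1 r2); split; [apply st_sync|]; auto|].
    apply Kant_par_le; eauto using d_par_unit, der_fin_dist. apply d_par_Par.
Qed.

Lemma d_par_prefixed : B_prefixed d_par.
Proof.
  intros X Y HX HY. assert (HB := Bfun_range d_par d_par_unit X Y HX HY).
  apply Rmin_glb.
  - rewrite <- (d_fix X Y HX HY). apply Bfun_mono; auto using d_par_unit.
    intros; apply Rmin_l.
  - destruct X as [| | | |B1 x1 x2]; destruct Y as [| | | |B2 y1 y2]; cbn; try lra.
    destruct (excluded_middle_informative _) as [[-> ->]|]; [|lra].
    apply closed_Par_inv in HX as [Hx1 Hx2]; apply closed_Par_inv in HY as [Hy1 Hy2].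
    assert (0 <= prob_or (d x1 y1) (d x2 y2)).
    { pose proof (d_unit x1 y1 Hx1 Hy1). pose proof (d_unit x2 y2 Hx2 Hy2).
      unfold prob_or. nra. }
    apply Bfun_le; auto. intros a. apply Haus_le; auto; intros p Hp.
    + apply d_par_match; auto.
    + rewrite (bisim_metric_sym x1 y1), (bisim_metric_sym x2 y2) by auto.
      apply d_par_match; auto.
Qed.

Lemma bisim_metric_Par x1 x2 y1 y2 :
  closed_term x1 -> closed_term x2 -> closed_term y1 -> closed_term y2 ->
  d (Par (fun _ => True) x1 x2) (Par (fun _ => True) y1 y2) <= prob_or (d x1 y1) (d x2 y2).
Proof.
  intros Hx1 Hx2 Hy1 Hy2. eapply Rle_trans; [|apply d_par_Par].
  apply bisim_metric_le_prefixed; auto using d_par_unit, d_par_prefixed, closed_Par.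
Qed.

Lemma combine_map_r {X Y Z} (h : Y -> Z) (q : list X) (ts : list Y) :
  combine q (map h ts) = map (fun e => (fst e, h (snd e))) (combine q ts).
Proof. revert q; induction ts; intros [|r q]; cbn; f_equal; auto. Qed.

Definition wsum (q : list R) (ts : list (term A)) (h : term A -> R) : R :=
  sumR (map (fun e => fst e * h (snd e)) (combine q ts)).

Definition pref_coupling (q : list R) (ts : list (term A)) (f g : term A -> term A) : coupling A :=
  map (fun e => (f (snd e), g (snd e), fst e)) (combine q ts).

Lemma pref_coupling_coupling q ts f g :
  Forall (fun r => 0 <= r) q ->
  is_coupling (pref_dist q (map f ts)) (pref_dist q (map g ts)) (pref_coupling q ts f g).
Proof.
  intros Hq. split; [|split].
  - unfold pref_coupling. rewrite Forall_map, Forall_forall in *.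
    intros [r u] He. apply Hq, (in_combine_l _ _ _ _ He).
  - intros u. rewrite marg1_left_mass. unfold left_mass, pref_coupling, pref_dist.
    rewrite map_map, combine_map_r. reflexivity.
  - intros u. rewrite marg2_right_mass. unfold right_mass, pref_coupling, pref_dist.
    rewrite map_map, combine_map_r. reflexivity.
Qed.

Lemma cost_pref_coupling dd q ts f g :
  cost dd (pref_coupling q ts f g) = wsum q ts (fun u => dd (f u) (g u)).
Proof. unfold cost, pref_coupling, wsum. rewrite map_map. reflexivity. Qed.

Lemma wsum_ext q ts h h' :
  (forall u, In u ts -> h u = h' u) -> wsum q ts h = wsum q ts h'.
Proof. intros H. apply sumR_ext. intros [r u] He. cbn. rewrite (H u (in_combine_r _ _ _ _ He)). reflexivity. Qed.

Lemma wsum_le q ts h h' :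
  Forall (fun r => 0 <= r) q -> (forall u, In u ts -> h u <= h' u) ->
  wsum q ts h <= wsum q ts h'.
Proof.
  intros Hq H. rewrite Forall_forall in Hq. apply sumR_le. intros [r u] He. cbn.
  apply Rmult_le_compat_l; [apply Hq, (in_combine_l _ _ _ _ He)|].
  apply H, (in_combine_r _ _ _ _ He).
Qed.

Lemma bisim_metric_Pref a q ts f g :
  Forall (fun r => 0 <= r) q ->
  closed_term (Pref a q (map f ts)) -> closed_term (Pref a q (map g ts)) ->
  d (Pref a q (map f ts)) (Pref a q (map g ts)) <= wsum q ts (fun u => d (f u) (g u)).
Proof.
  intros Hq Hcf Hcg.
  assert (Hf : fin_dist (pref_dist q (map f ts))) by (eapply fin_dist_step; [constructor|exact Hcf]).
  assert (Hg : fin_dist (pref_dist q (map g ts))) by (eapply fin_dist_step; [constructor|exact Hcg]).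
  assert (Hfg : Kant d (pref_dist q (map f ts)) (pref_dist q (map g ts)) <=
                wsum q ts (fun u => d (f u) (g u))).
  { rewrite <- cost_pref_coupling. apply Kant_le_cost; auto. apply pref_coupling_coupling, Hq. }
  assert (Hgf : Kant d (pref_dist q (map g ts)) (pref_dist q (map f ts)) <=
                wsum q ts (fun u => d (f u) (g u))).
  { apply closed_Pref_inv in Hcf as [_ [_ Hfts]]. apply closed_Pref_inv in Hcg as [_ [_ Hgts]].
    rewrite Forall_forall in Hfts, Hgts.
    rewrite (wsum_ext q ts _ (fun u => d (g u) (f u)))
      by (intros u Hu; apply bisim_metric_sym; auto using in_map).
    rewrite <- cost_pref_coupling. apply Kant_le_cost; auto. apply pref_coupling_coupling, Hq. }
  assert (H0 : 0 <= wsum q ts (fun u => d (f u) (g u))).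
  { rewrite <- cost_pref_coupling.
    apply (cost_range d d_unit _ _ _ Hf Hg), pref_coupling_coupling, Hq. }
  rewrite <- d_fix by auto. apply Bfun_le; [exact H0|]. intros b.
  apply Haus_le; [exact H0| |]; intros p Hp; inversion Hp; subst.
  - eapply Rle_trans; [|exact Hfg]. apply (Rinf1_le_elem _ 0).
    + intros s [p' [Hp' ->]]. apply Kant_range; eauto using der_fin_dist.
    + exists (pref_dist q (map g ts)). split; [constructor|reflexivity].
  - eapply Rle_trans; [|exact Hgf]. apply (Rinf1_le_elem _ 0).
    + intros s [p' [Hp' ->]]. apply Kant_range; eauto using der_fin_dist.
    + exists (pref_dist q (map f ts)). split; [constructor|reflexivity].
Qed.

End BisimMetric.
End Distributions.

Definition inf_prod (m : mult) (e : nat -> R) : R :=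
  Rinf1 (fun p => exists n, p = partial_prod m e n).

Section Products.
Variable e : nat -> R.
Hypothesis e_unit : forall x, 0 <= e x <= 1.

Lemma factor_range m x : 0 <= factor m e x <= 1.
Proof.
  unfold factor. destruct (m x) as [k|].
  - specialize (e_unit x). induction k; cbn; [lra|]. split; nra.
  - destruct (excluded_middle_informative _); lra.
Qed.

Lemma partial_prod_S m n : partial_prod m e (S n) = partial_prod m e n * factor m e n.
Proof.
  unfold partial_prod. rewrite seq_S, map_app, fold_right_app. cbn.
  generalize (map (factor m e) (seq 0 n)). intros l.
  induction l; cbn; [ring|]. rewrite IHl. ring.
Qed.

Lemma partial_prod_range m n : 0 <= partial_prod m e n <= 1.
Proof.
  induction n; [cbn; lra|]. rewrite partial_prod_S.
  pose proof (factor_range m n). split; nra.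
Qed.

Lemma partial_prod_antitone m k n : (k <= n)%nat -> partial_prod m e n <= partial_prod m e k.
Proof.
  induction 1 as [|n _ IH]; [lra|]. rewrite partial_prod_S.
  pose proof (factor_range m n). pose proof (partial_prod_range m n). nra.
Qed.

Lemma partial_prod_madd m1 m2 n :
  partial_prod (madd m1 m2) e n = partial_prod m1 e n * partial_prod m2 e n.
Proof.
  induction n; [cbn; ring|]. rewrite !partial_prod_S, IHn.
  assert (factor (madd m1 m2) e n = factor m1 e n * factor m2 e n) as ->; [|ring].
  unfold factor, madd, oadd.
  destruct (m1 n), (m2 n); try destruct (excluded_middle_informative (e n = 0)) as [h|h];
    rewrite ?pow_add, ?h, ?Rminus_0_r, ?pow1; ring.
Qed.

Lemma inf_prod_range m : 0 <= inf_prod m e <= 1.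
Proof. apply Rinf1_range. intros p [n ->]. apply partial_prod_range. Qed.

Lemma inf_prod_le_partial m n : inf_prod m e <= partial_prod m e n.
Proof.
  apply (Rinf1_le_elem _ 0); [|eauto]. intros p [k ->]. apply partial_prod_range.
Qed.

Lemma inf_prod_madd m1 m2 : inf_prod (madd m1 m2) e <= inf_prod m1 e * inf_prod m2 e.
Proof.
  pose proof (inf_prod_range m1). pose proof (inf_prod_range m2).
  apply Rle_plus_epsilon. intros eps Heps. set (dl := Rmin 1 (eps / 3)).
  assert (Hdl : 0 < dl /\ dl <= 1 /\ dl <= eps / 3) by (unfold dl, Rmin; destruct (Rle_dec _ _); lra).
  assert (NE : forall m, exists p, exists n, p = partial_prod m e n)
    by (intros m; exists (partial_prod m e 0); exists 0%nat; reflexivity).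
  assert (LB : forall m p, (exists n, p = partial_prod m e n) -> 0 <= p)
    by (intros m p [n ->]; apply partial_prod_range).
  destruct (Rinf1_approx _ 0 dl (NE m1) (LB m1)) as [x1 [[n1 ->] H1]]; [lra|].
  destruct (Rinf1_approx _ 0 dl (NE m2) (LB m2)) as [x2 [[n2 ->] H2]]; [lra|].
  fold (inf_prod m1 e) in H1. fold (inf_prod m2 e) in H2.
  set (n := Nat.max n1 n2).
  pose proof (inf_prod_le_partial (madd m1 m2) n) as HH. rewrite partial_prod_madd in HH.
  pose proof (partial_prod_antitone m1 n1 n (Nat.le_max_l _ _)).
  pose proof (partial_prod_antitone m2 n2 n (Nat.le_max_r _ _)).
  pose proof (partial_prod_range m1 n). pose proof (partial_prod_range m2 n).
  assert (partial_prod m1 e n * partial_prod m2 e n <= (inf_prod m1 e + dl) * (inf_prod m2 e + dl))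
    by (apply Rmult_le_compat; lra).
  nra.
Qed.

Lemma inf_prod_mone x : inf_prod (mone x) e <= 1 - e x.
Proof.
  eapply Rle_trans; [apply (inf_prod_le_partial _ (S x))|].
  assert (Hk : forall k, (k <= x)%nat -> partial_prod (mone x) e k = 1).
  { induction k; intros Hk; [reflexivity|]. rewrite partial_prod_S, IHk by lia.
    unfold factor, mone. replace (Nat.eqb k x) with false; [cbn; ring|].
    symmetry. apply Nat.eqb_neq. lia. }
  rewrite partial_prod_S, Hk by lia. unfold factor, mone. rewrite Nat.eqb_refl. cbn. lra.
Qed.

End Products.

Section Semantics.
Context {A : Type}.

Fixpoint term_nested_ind (P : term A -> Prop) (Hnil : P Nil) (Hvar : forall x, P (Var x))
  (Hpref : forall a q ts, Forall P ts -> P (Pref a q ts))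
  (Hplus : forall t1 t2, P t1 -> P t2 -> P (Plus t1 t2))
  (Hpar : forall B t1 t2, P t1 -> P t2 -> P (Par B t1 t2)) (t : term A) : P t :=
  let IH := term_nested_ind P Hnil Hvar Hpref Hplus Hpar in
  match t with
  | Nil => Hnil
  | Var x => Hvar x
  | Pref a q ts => Hpref a q ts
      ((fix go (l : list (term A)) : Forall P l :=
          match l with
          | [] => Forall_nil _
          | u :: l' => Forall_cons _ (IH u) (go l')
          end) ts)
  | Plus t1 t2 => Hplus t1 t2 (IH t1) (IH t2)
  | Par B t1 t2 => Hpar B t1 t2 (IH t1) (IH t2)
  end.

Lemma subst_Pref (s : nat -> term A) a q ts :
  subst s (Pref a q ts) = Pref a q (map (subst s) ts).
Proof. reflexivity. Qed.

Lemma closed_subst (s : nat -> term A) t :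
  (forall x, closed_term (s x)) -> prob_term t -> closed_term (subst s t).
Proof.
  intros Hs. induction t as [| x | a q ts IH | t1 t2 IH1 IH2 | B t1 t2 IH1 IH2]
    using term_nested_ind; intros Ht; inversion Ht; subst.
  - split; constructor.
  - apply Hs.
  - rewrite subst_Pref.
    assert (HF : Forall closed_term (map (subst s) ts)).
    { apply Forall_map. rewrite Forall_forall in *. auto. }
    split; constructor; auto.
    + rewrite length_map; auto.
    + eapply Forall_impl; [|exact HF]. intros u [h _]; exact h.
    + eapply Forall_impl; [|exact HF]. intros u [_ h]; exact h.
  - apply closed_Par; auto.
Qed.

Definition pexp (P : pdist) (h : mult -> R) : R := sumR (map (fun c => fst c * h (snd c)) P).

Lemma sem_Pref (a : A) q ts :
  sem (Pref a q ts) =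
  flat_map (fun e => map (fun c => (fst e * fst c, snd c)) (sem (snd e))) (combine q ts).
Proof. revert q; induction ts; intros [|r q]; cbn; auto. f_equal. apply IHts. Qed.

Lemma pexp_Pref (a : A) q ts h :
  pexp (sem (Pref a q ts)) h = wsum q ts (fun u => pexp (sem u) h).
Proof.
  unfold pexp, wsum. rewrite sem_Pref, sumR_flat_map. apply sumR_ext. intros e _.
  rewrite map_map, <- sumR_scal_l. apply sumR_ext. intros; cbn; ring.
Qed.

Lemma pexp_Par (B : A -> Prop) t1 t2 h :
  pexp (sem (Par B t1 t2)) h =
  sumR (map (fun c1 => sumR (map (fun c2 => fst c1 * fst c2 * h (madd (snd c1) (snd c2)))
    (sem t2))) (sem t1)).
Proof.
  unfold pexp. cbn [sem]. rewrite sumR_flat_map. apply sumR_ext. intros.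
  rewrite map_map. reflexivity.
Qed.

Lemma wsum_one (q : list R) (ts : list (term A)) : length q = length ts -> wsum q ts (fun _ => 1) = sumR q.
Proof.
  intros H. unfold wsum. rewrite <- (map_fst_combine q ts H) at 2.
  apply sumR_ext. intros; ring.
Qed.

Lemma sem_prob (t : term A) :
  prob_term t -> Forall (fun c => 0 <= fst c) (sem t) /\ pexp (sem t) (fun _ => 1) = 1.
Proof.
  induction t as [| x | a q ts IH | t1 t2 IH1 IH2 | B t1 t2 IH1 IH2]
    using term_nested_ind; intros Ht; inversion Ht; subst.
  - split; [repeat constructor; cbn; lra|cbn; ring].
  - split; [repeat constructor; cbn; lra|cbn; ring].
  - destruct H2 as [_ [Hq Hsum]]. rewrite Forall_forall in IH, Hq, H4. split.
    + rewrite sem_Pref, Forall_forall. intros c Hc.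
      apply in_flat_map in Hc as [[r u] [Hru Hc]]. apply in_map_iff in Hc as [c' [<- Hc']].
      destruct (IH u (in_combine_r _ _ _ _ Hru) (H4 u (in_combine_r _ _ _ _ Hru))) as [HF _].
      rewrite Forall_forall in HF. pose proof (HF c' Hc').
      pose proof (Hq r (in_combine_l _ _ _ _ Hru)). cbn. nra.
    + rewrite pexp_Pref. transitivity (wsum q ts (fun _ => 1)); [|rewrite wsum_one; auto].
      unfold wsum.
      apply sumR_ext. intros [r u] Hru. cbn. f_equal.
      apply (IH u (in_combine_r _ _ _ _ Hru) (H4 u (in_combine_r _ _ _ _ Hru))).
  - destruct (IH1 H1) as [F1 S1], (IH2 H3) as [F2 S2]. split.
    + rewrite Forall_forall in *. intros c Hc. cbn [sem] in Hc.
      apply in_flat_map in Hc as [c1 [Hc1 Hc]]. apply in_map_iff in Hc as [c2 [<- Hc2]].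
      apply Rmult_le_pos; auto.
    + rewrite pexp_Par. transitivity (pexp (sem t1) (fun _ => 1) * pexp (sem t2) (fun _ => 1));
        [|rewrite S1, S2; ring].
      unfold pexp. rewrite <- sumR_mul. apply sumR_ext; intros; apply sumR_ext; intros. ring.
Qed.

Lemma pda_pexp (P : pdist) e :
  pda P e = pexp P (fun _ => 1) - pexp P (fun m => inf_prod m e).
Proof. unfold pda, pexp. rewrite <- sumR_minus. apply sumR_ext. intros; unfold dda, inf_prod; ring. Qed.

Lemma pda_single (m : mult) e : pda [(1, m)] e = 1 - inf_prod m e.
Proof. unfold pda, sumR; cbn [map fold_right fst snd]. unfold dda, inf_prod. ring. Qed.

Lemma pexp_inf_prod_Par (B : A -> Prop) t1 t2 e :
  (forall x, 0 <= e x <= 1) ->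
  Forall (fun c => 0 <= fst c) (sem t1) -> Forall (fun c => 0 <= fst c) (sem t2) ->
  pexp (sem (Par B t1 t2)) (fun m => inf_prod m e) <=
  pexp (sem t1) (fun m => inf_prod m e) * pexp (sem t2) (fun m => inf_prod m e).
Proof.
  intros He F1 F2. rewrite pexp_Par. unfold pexp. rewrite <- sumR_mul.
  rewrite Forall_forall in F1, F2.
  apply sumR_le; intros c1 Hc1; apply sumR_le; intros c2 Hc2.
  pose proof (inf_prod_madd e He (snd c1) (snd c2)).
  assert (0 <= fst c1 * fst c2) by (apply Rmult_le_pos; auto).
  apply Rle_trans with (fst c1 * fst c2 * (inf_prod (snd c1) e * inf_prod (snd c2) e)).
  - apply Rmult_le_compat_l; auto.
  - right; ring.
Qed.

Lemma pexp_inf_prod_range (P : pdist) e :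
  (forall x, 0 <= e x <= 1) -> Forall (fun c => 0 <= fst c) P -> pexp P (fun _ => 1) = 1 ->
  0 <= pexp P (fun m => inf_prod m e) <= 1.
Proof.
  intros He HF HS. rewrite Forall_forall in HF. rewrite <- HS. split.
  - apply sumR_nonneg. intros c Hc. apply Rmult_le_pos; [auto|apply inf_prod_range, He].
  - apply sumR_le. intros c Hc. pose proof (inf_prod_range e He (snd c)).
    pose proof (HF c Hc). nra.
Qed.

Lemma bisim_metric_subst_le_pda (d : term A -> term A -> R) (s1 s2 : nat -> term A) t :
  is_bisim_metric d ->
  (forall x, closed_term (s1 x)) -> (forall x, closed_term (s2 x)) ->
  prob_term t -> d (subst s1 t) (subst s2 t) <= pda (sem t) (fun x => d (s1 x) (s2 x)).
Proof.
  intros Hd Hs1 Hs2. set (e := fun x => d (s1 x) (s2 x)).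
  assert (He : forall x, 0 <= e x <= 1) by (intros x; apply (proj1 Hd); auto).
  induction t as [| x | a q ts IH | t1 t2 IH1 IH2 | B t1 t2 IH1 IH2]
    using term_nested_ind; intros Ht; inversion Ht; subst.
  - pose proof (bisim_metric_Nil d Hd). pose proof (inf_prod_range e He mzero).
    cbn [sem subst]. rewrite pda_single. lra.
  - pose proof (inf_prod_mone e He x).
    cbn [sem subst]. rewrite pda_single. unfold e in *. lra.
  - destruct H2 as [_ [Hq _]].
    assert (Hq' : Forall (fun r => 0 <= r) q) by (eapply Forall_impl; [|exact Hq]; intros r Hr; lra).
    rewrite !subst_Pref. eapply Rle_trans.
    + apply bisim_metric_Pref; auto; rewrite <- subst_Pref; apply closed_subst; auto.
    + change (pda (sem (Pref a q ts)) e) with (pexp (sem (Pref a q ts)) (fun m => dda m e)).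
      rewrite pexp_Pref. apply wsum_le; auto. rewrite Forall_forall in IH, H4. auto.
  - destruct (sem_prob t1 H1) as [F1 S1], (sem_prob t2 H3) as [F2 S2], (sem_prob _ Ht) as [_ S].
    specialize (IH1 H1). specialize (IH2 H3).
    rewrite pda_pexp, S1 in IH1. rewrite pda_pexp, S2 in IH2. rewrite pda_pexp, S.
    pose proof (pexp_inf_prod_range _ e He F1 S1). pose proof (pexp_inf_prod_range _ e He F2 S2).
    pose proof (pexp_inf_prod_Par (fun _ => True) t1 t2 e He F1 F2).
    cbn [subst]. eapply Rle_trans; [apply bisim_metric_Par; auto using closed_subst|].
    eapply Rle_trans; [apply prob_or_le; split; [exact IH1| |exact IH2|]; lra|].
    unfold prob_or. lra.
Qed.

End Semantics.

Theorem proposition3 (A : Type)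
  (HA : exists f : A -> nat, forall a b, f a = f b -> a = b)
  (d : term A -> term A -> R) (Hd : is_bisim_metric d)
  (t : term A) (Ht : prob_term t)
  (s1 s2 : nat -> term A)
  (Hs1 : forall x, closed_term (s1 x)) (Hs2 : forall x, closed_term (s2 x))
  (Hlt : forall x, d (s1 x) (s2 x) < 1) :
  d (subst s1 t) (subst s2 t) <= pda (sem t) (fun x => d (s1 x) (s2 x)).
Proof. apply bisim_metric_subst_le_pda; assumption. Qed.
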